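(* Let $\mathbb{V}$ be a horizontal line through the identity in the first Heisenberg group $\mathbb{H}$, let $\mathcal{X}=\{\mathbb{V}*a:a\in\mathbb{H}\}$ be the space of right cosets of $\mathbb{V}$ with the metric $\operatorname{dist}_{cc}(\mathbb{V}*a,\mathbb{V}*a')$ (the Carnot–Carathéodory distance between the two cosets as subsets of $\mathbb{H}$), and let $\pi^R\colon\mathbb{H}\to\mathcal{X}$ be the quotient map $p\mapsto$ the right coset containing $p$. Then, with $\mathbb{H}$ carrying the Korányi metric, $\pi^R$ is locally David–Semmes $2$-regular, i.e. $(\mathbb{H},\mathcal{X},\pi^R)$ is a $2$-foliation. (The metric space $\mathcal{X}$ is isometric to the Grushin plane $(G,d_{cc})$.)
   Context: $\mathbb{H}=\mathbb{R}^2\times\mathbb{R}$ with $(x,t)*(x',t')=(x+x',t+t'+2(x_2x'_1-x_1x'_2))$, Korányi metric $d_{\mathbb{H}}(p,q)=\|p^{-1}*q\|_{\mathbb{H}}$, $\|(x,t)\|_{\mathbb{H}}=(|x|^4+t^2)^{1/4}$. A horizontal line is $\mathbb{V}=L\times\{0\}$ for a one-dimensional subspace $L\subseteq\mathbb{R}^2$. Let $X_1,X_2$ be the left-invariant vector fields agreeing with $\partial_{x_1},\partial_{x_2}$ at the identity; a smooth curve is horizontal if its tangent lies in $\operatorname{span}\{X_1,X_2\}$, its length computed declaring $X_1,X_2$ orthonormal, and $d_{cc}$ on $\mathbb{H}$ is the infimum of lengths of horizontal curves joining two points ($d_{cc}$ is comparable to $d_{\mathbb{H}}$). The Grushin plane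 $G$ is $\mathbb{R}^2$ with the metric $d_{cc}((u_1,v_1),(u_2,v_2))=\inf\int_a^b\sqrt{u'(s)^2+v'(s)^2/u(s)^2}\,ds$ over absolutely continuous curves $(u,v)$ joining the points with $v'(s)=0$ whenever $u(s)=0$. A surjection $\pi\colon X\to W$ between proper metric spaces is locally David–Semmes $s$-regular if for every compact $K\subseteq X$, $\pi|_K$ is Lipschitz and there are $C\ge1$, $r_0>0$ such that for every ball $B\subseteq W$ of radius $r<r_0$, $\pi^{-1}(B)\cap K$ can be covered by at most $Cr^{-s}$ balls in $X$ of radius $Cr$. *)

From Stdlib Require Import Reals Lra List ClassicalEpsilon.
Open Scope R_scope.

Definition H : Type := (R * R * R)%type.

Definition hmul (p q : H) : H :=
  let '(x1, x2, t) := p in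
  let '(y1, y2, s) := q in
  (x1 + y1, x2 + y2, t + s + 2 * (x2 * y1 - x1 * y2)).

Definition hinv (p : H) : H :=
  let '(x1, x2, t) := p in (- x1, - x2, - t).

Definition kor_norm (p : H) : R :=
  let '(x1, x2, t) := p in sqrt (sqrt ((x1 ^ 2 + x2 ^ 2) ^ 2 + t ^ 2)).

Definition dH (p q : H) : R := kor_norm (hmul (hinv p) q).

Definition is_glb (S : R -> Prop) (m : R) : Prop :=
  (forall x, S x -> m <= x) /\
  (forall m', (forall x, S x -> m' <= x) -> m' <= m).

Definition Rinf (S : R -> Prop) : R := epsilon (inhabits 0) (is_glb S).

(** X1 = d/dx1 + 2 x2 d/dt and X2 = d/dx2 - 2 x1 d/dt are the left-invariant
    fields agreeing with d/dx1, d/dx2 at the identity.  A C^1 curve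
    s |-> (g1 s, g2 s, g3 s), s in [a,b], with derivatives g1', g2', g3', is
    horizontal iff g3' = 2 (g2 g1' - g1 g2'); its length (X1, X2 orthonormal)
    is the integral of sqrt (g1'^2 + g2'^2). *)
Definition horizontal_C1_curve (a b : R) (g1 g2 g3 g1' g2' g3' : R -> R) : Prop :=
  a < b /\
  forall s, a <= s <= b ->
    derivable_pt_lim g1 s (g1' s) /\
    derivable_pt_lim g2 s (g2' s) /\
    derivable_pt_lim g3 s (g3' s) /\
    continuity_pt g1' s /\ continuity_pt g2' s /\ continuity_pt g3' s /\
    g3' s = 2 * (g2 s * g1' s - g1 s * g2' s).

Definition cc_length_of_curve_joining (p q : H) (L : R) : Prop :=
  exists (a b : R) (g1 g2 g3 g1' g2' g3' : R -> R),
    horizontal_C1_curve a b g1 g2 g3 g1' g2' g3' /\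
    (g1 a, g2 a, g3 a) = p /\ (g1 b, g2 b, g3 b) = q /\
    exists pr : Riemann_integrable (fun s => sqrt (g1' s ^ 2 + g2' s ^ 2)) a b,
      RiemannInt pr = L.

Definition dcc (p q : H) : R := Rinf (cc_length_of_curve_joining p q).

Definition set_dist_cc (A B : H -> Prop) : R :=
  Rinf (fun d => exists p q, A p /\ B q /\ d = dcc p q).

Definition hline (v : R * R) : H -> Prop :=
  fun p => exists s : R, p = (s * fst v, s * snd v, 0).

Definition right_coset (v : R * R) (a : H) : H -> Prop :=
  fun p => exists q, hline v q /\ p = hmul q a.

Definition coset_space (v : R * R) : Type :=
  { S : H -> Prop | exists a : H, S = right_coset v a }.

Definition coset_dist (v : R * R) (A B : coset_space v) : R :=
  set_dist_cc (proj1_sig A) (proj1_sig B).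

Definition piR (v : R * R) (p : H) : coset_space v :=
  exist _ (right_coset v p) (ex_intro _ p eq_refl).

Definition seq_compact {X : Type} (d : X -> X -> R) (K : X -> Prop) : Prop :=
  forall u : nat -> X, (forall n, K (u n)) ->
    exists (phi : nat -> nat) (l : X),
      (forall n m, (n < m)%nat -> (phi n < phi m)%nat) /\ K l /\
      Un_cv (fun n => d (u (phi n)) l) 0.

Definition locally_DS_regular {X W : Type} (dX : X -> X -> R) (dW : W -> W -> R)
    (pi : X -> W) (s : R) : Prop :=
  (forall w, exists x, pi x = w) /\
  forall K : X -> Prop, seq_compact dX K ->
    (exists Lip : R, forall x y, K x -> K y -> dW (pi x) (pi y) <= Lip * dX x y) /\
    exists C r0 : R, 1 <= C /\ 0 < r0 /\
      forall (w : W) (r : R), 0 < r < r0 ->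
        exists centers : list X,
          INR (length centers) <= C * Rpower r (- s) /\
          forall x, K x -> dW w (pi x) < r ->
            exists c, In c centers /\ dX c x < C * r.

From Stdlib Require Import Reals Lra Lia Psatz ClassicalEpsilon Classical List ZArith.
From Coquelicot Require Import Coquelicot.
Open Scope R_scope.

(* The proof rests on a ball-box comparison between the Carnot-Caratheodory
   distance and the Koranyi metric.  An explicit polynomial horizontal curve
   (a planar path around a prescribed area) gives dcc <= 1200 dH, and
   integrating the horizontality equation along any horizontal curve of length
   L gives dH <= 4 L.  The first bound makes the projection Lipschitz; the
   second shows that when two cosets are r-close, a point of one is obtained
   from a point of the other as V(u) * x0 * E with ||E|| <= 32 r.  On a
   compact (hence bounded) set the parameter u stays bounded, and moving along
   V by eta <= r^2 and conjugating by x0 costs only O(r) in Koranyi norm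
   (the induced vertical shift is linear in eta).  Hence O(r^-2) grid points
   V(-U + j r^2) * x0 cover the bounded part of the preimage of an r-ball by
   balls of radius O(r). *)

(** A nonempty set of reals that is bounded below has a greatest lower bound
    (completeness applied to the reflected set); hence [Rinf] is one. *)
Lemma glb_exists (S : R -> Prop) (m : R) :
  (exists x, S x) -> (forall x, S x -> m <= x) -> exists g, is_glb S g.
Proof.
  intros [x0 Hx0] Hlb.
  destruct (completeness (fun y => S (- y))) as [g [Hub Hleast]].
  - exists (- m). intros y Hy. specialize (Hlb _ Hy). lra.
  - exists (- x0). now rewrite Ropp_involutive.
  - exists (- g). split.
    + intros x Hx. assert (- x <= g) by (apply Hub; now rewrite Ropp_involutive). lra.
    + intros m' Hm'. assert (g <= - m'); [|lra].
      apply Hleast. intros y Hy. specialize (Hm' _ Hy). lra.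
Qed.

Section Infimum.
Variables (S : R -> Prop) (m : R).
Hypothesis S_nonempty : exists x, S x.
Hypothesis S_bounded : forall x, S x -> m <= x.

Lemma Rinf_glb : is_glb S (Rinf S).
Proof. unfold Rinf. apply epsilon_spec. now apply (glb_exists S m). Qed.

Lemma Rinf_le x : S x -> Rinf S <= x.
Proof. apply (proj1 Rinf_glb). Qed.

Lemma Rinf_ge : m <= Rinf S.
Proof. apply (proj2 Rinf_glb). exact S_bounded. Qed.

Lemma Rinf_lt r : Rinf S < r -> exists x, S x /\ x < r.
Proof.
  intros Hr. apply NNPP. intro Hnone.
  assert (r <= Rinf S); [|lra].
  apply (proj2 Rinf_glb). intros y Hy. apply Rnot_lt_le. intro Hyr. eauto.
Qed.
End Infimum.

Lemma triple_eq (a b c a' b' c' : R) : a = a' -> b = b' -> c = c' -> (a, b, c) = (a', b', c').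
Proof. now intros -> -> ->. Qed.

Ltac heis_ring := simpl; apply triple_eq; ring.

Lemma hmul_assoc p q r : hmul (hmul p q) r = hmul p (hmul q r).
Proof. destruct p as [[? ?] ?], q as [[? ?] ?], r as [[? ?] ?]; heis_ring. Qed.

Lemma hmul_1l p : hmul (0, 0, 0) p = p.
Proof. destruct p as [[? ?] ?]; heis_ring. Qed.

Lemma hmul_inv_r p : hmul p (hinv p) = (0, 0, 0).
Proof. destruct p as [[? ?] ?]; heis_ring. Qed.

Lemma hinv_mul p q : hinv (hmul p q) = hmul (hinv q) (hinv p).
Proof. destruct p as [[? ?] ?], q as [[? ?] ?]; heis_ring. Qed.

Lemma hinv_inv p : hinv (hinv p) = p.
Proof. destruct p as [[? ?] ?]; heis_ring. Qed.

Lemma hmul_increment p q : q = hmul p (hmul (hinv p) q).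
Proof. now rewrite <- hmul_assoc, hmul_inv_r, hmul_1l. Qed.

(** The Koranyi norm is [sqrt (sqrt X)] with [X = (a^2+b^2)^2 + c^2], so comparing
    it with [k >= 0] amounts to comparing [X] with [k^4]. *)
Lemma sqrt_sqrt_pow4 k : 0 <= k -> sqrt (sqrt (k ^ 4)) = k.
Proof.
  intros Hk. replace (k ^ 4) with ((k ^ 2) ^ 2) by ring.
  rewrite sqrt_pow2 by (apply pow_le; lra). now rewrite sqrt_pow2.
Qed.

Lemma kor_norm_le a b c k :
  0 <= k -> (a ^ 2 + b ^ 2) ^ 2 + c ^ 2 <= k ^ 4 -> kor_norm (a, b, c) <= k.
Proof.
  intros Hk HX. unfold kor_norm. rewrite <- (sqrt_sqrt_pow4 k Hk).
  now apply sqrt_le_1_alt, sqrt_le_1_alt.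
Qed.

Lemma kor_norm_ge a b c k :
  0 <= k -> k ^ 4 <= (a ^ 2 + b ^ 2) ^ 2 + c ^ 2 -> k <= kor_norm (a, b, c).
Proof.
  intros Hk HX. unfold kor_norm. rewrite <- (sqrt_sqrt_pow4 k Hk).
  now apply sqrt_le_1_alt, sqrt_le_1_alt.
Qed.

Lemma kor_nonneg p : 0 <= kor_norm p.
Proof. destruct p as [[? ?] ?]. apply sqrt_pos. Qed.

Lemma kor_coord_bounds a b c :
  Rabs a <= kor_norm (a, b, c) /\ Rabs b <= kor_norm (a, b, c) /\
  Rabs c <= kor_norm (a, b, c) ^ 2.
Proof.
  assert (Ha : Rabs a ^ 4 = (a ^ 2) ^ 2) by (rewrite <- (pow2_abs a); ring).
  assert (Hb : Rabs b ^ 4 = (b ^ 2) ^ 2) by (rewrite <- (pow2_abs b); ring).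
  pose proof (pow2_ge_0 a). pose proof (pow2_ge_0 b). pose proof (pow2_ge_0 c).
  split; [|split].
  - apply kor_norm_ge; [apply Rabs_pos|]. rewrite Ha. nra.
  - apply kor_norm_ge; [apply Rabs_pos|]. rewrite Hb. nra.
  - assert (Hc : sqrt (Rabs c) <= kor_norm (a, b, c)).
    { apply kor_norm_ge; [apply sqrt_pos|].
      replace (sqrt (Rabs c) ^ 4) with ((sqrt (Rabs c) ^ 2) ^ 2) by ring.
      rewrite pow2_sqrt by apply Rabs_pos. rewrite pow2_abs.
      pose proof (pow2_ge_0 (a ^ 2 + b ^ 2)). lra. }
    rewrite <- (pow2_sqrt (Rabs c)) by apply Rabs_pos.
    apply pow_incr. split; [apply sqrt_pos | exact Hc].
Qed.

Lemma kor_norm_bound a b c M :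
  Rabs a <= M -> Rabs b <= M -> Rabs c <= M ^ 2 -> kor_norm (a, b, c) <= 2 * M.
Proof.
  intros Ha Hb Hc.
  assert (HM : 0 <= M) by (pose proof (Rabs_pos a); lra).
  assert (Sq : forall x N, Rabs x <= N -> x ^ 2 <= N ^ 2).
  { intros x N Hx. rewrite <- (pow2_abs x). apply pow_incr. split; [apply Rabs_pos|exact Hx]. }
  apply kor_norm_le; [lra|].
  pose proof (Sq a M Ha). pose proof (Sq b M Hb). pose proof (Sq c (M ^ 2) Hc).
  pose proof (pow2_ge_0 a). pose proof (pow2_ge_0 b).
  assert ((a ^ 2 + b ^ 2) ^ 2 <= (2 * M ^ 2) ^ 2) by (apply pow_incr; lra).
  nra.
Qed.

Lemma kor_quasi p q : kor_norm (hmul p q) <= 4 * (kor_norm p + kor_norm q).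
Proof.
  destruct p as [[p1 p2] p3], q as [[q1 q2] q3]. simpl hmul.
  destruct (kor_coord_bounds p1 p2 p3) as [A1 [A2 A3]].
  destruct (kor_coord_bounds q1 q2 q3) as [B1 [B2 B3]].
  pose proof (kor_nonneg (p1, p2, p3)). pose proof (kor_nonneg (q1, q2, q3)).
  set (P := kor_norm (p1, p2, p3)) in *. set (Q := kor_norm (q1, q2, q3)) in *.
  replace (4 * (P + Q)) with (2 * (2 * (P + Q))) by ring.
  apply kor_norm_bound.
  - eapply Rle_trans; [apply Rabs_triang|]. lra.
  - eapply Rle_trans; [apply Rabs_triang|]. lra.
  - assert (Hsympl : Rabs (2 * (p2 * q1 - p1 * q2)) <= 4 * P * Q).
    { rewrite Rabs_mult, (Rabs_pos_eq 2) by lra. unfold Rminus.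
      pose proof (Rabs_triang (p2 * q1) (- (p1 * q2))).
      rewrite Rabs_Ropp, !Rabs_mult in *.
      assert (Rabs p2 * Rabs q1 <= P * Q) by (apply Rmult_le_compat; auto using Rabs_pos).
      assert (Rabs p1 * Rabs q2 <= P * Q) by (apply Rmult_le_compat; auto using Rabs_pos).
      lra. }
    pose proof (Rabs_triang (p3 + q3) (2 * (p2 * q1 - p1 * q2))).
    pose proof (Rabs_triang p3 q3). nra.
Qed.

Lemma kor_inv p : kor_norm (hinv p) = kor_norm p.
Proof. destruct p as [[a b] c]. unfold hinv, kor_norm. do 2 f_equal. ring. Qed.

Lemma dH_sym p q : dH p q = dH q p.
Proof. unfold dH. now rewrite <- kor_inv, hinv_mul, hinv_inv. Qed.

Lemma derivable_continuous f : (forall x, exists l, derivable_pt_lim f x l) -> forall x, continuity_pt f x.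
Proof.
  intros Hf x. destruct (Hf x) as [l Hl].
  exact (derivable_continuous_pt f x (exist _ l Hl)).
Qed.

Lemma sqrt_sum_sq_le a b : sqrt (a ^ 2 + b ^ 2) <= Rabs a + Rabs b.
Proof.
  pose proof (Rabs_pos a); pose proof (Rabs_pos b).
  rewrite <- (sqrt_pow2 (Rabs a + Rabs b)) by lra.
  apply sqrt_le_1_alt. rewrite <- (pow2_abs a), <- (pow2_abs b). nra.
Qed.

Definition horizontal_speed (f1' f2' : R -> R) (s : R) : R := sqrt (f1' s ^ 2 + f2' s ^ 2).

(** Its planar part runs from [0] to [(z1, z2)] along the segment perturbed by
    the polynomial bumps [al * bump1] and [be * bump2], which vanish at both
    ends; its vertical part [lift3] is the horizontal lift, whose endpoint
    value is the enclosed signed area [2 al be / 35].  The whole curve is the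
    left translate by [p]. *)
Section ExplicitCurve.
Variables p1 p2 p3 z1 z2 al be : R.

Definition bump1 (s : R) : R := s - 3 * s ^ 2 + 2 * s ^ 3.
Definition bump1' (s : R) : R := 1 - 6 * s + 6 * s ^ 2.
Definition bump2 (s : R) : R := s - 6 * s ^ 2 + 10 * s ^ 3 - 5 * s ^ 4.
Definition bump2' (s : R) : R := 1 - 12 * s + 30 * s ^ 2 - 20 * s ^ 3.
Definition planar1 (s : R) : R := z1 * s + al * bump1 s.
Definition planar1' (s : R) : R := z1 + al * bump1' s.
Definition planar2 (s : R) : R := z2 * s + be * bump2 s.
Definition planar2' (s : R) : R := z2 + be * bump2' s.
Definition lift3 (s : R) : R :=
  2 * (z2 * al * (- s ^ 3 + s ^ 4) + z1 * be * (2 * s ^ 3 - 5 * s ^ 4 + 3 * s ^ 5)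
   + al * be * (s ^ 3 - 4 * s ^ 4 + 33 / 5 * s ^ 5 - 5 * s ^ 6 + 10 / 7 * s ^ 7)).
Definition curve1 (s : R) : R := p1 + planar1 s.
Definition curve2 (s : R) : R := p2 + planar2 s.
Definition curve3 (s : R) : R := p3 + lift3 s + 2 * (p2 * planar1 s - p1 * planar2 s).
Definition curve3' (s : R) : R := 2 * (curve2 s * planar1' s - curve1 s * planar2' s).
Notation speed := (horizontal_speed planar1' planar2').

Lemma curve1_der x : derivable_pt_lim curve1 x (planar1' x).
Proof. apply is_derive_Reals. unfold curve1, planar1, planar1', bump1, bump1'. auto_derive; [exact I|ring]. Qed.

Lemma curve2_der x : derivable_pt_lim curve2 x (planar2' x).
Proof. apply is_derive_Reals. unfold curve2, planar2, planar2', bump2, bump2'. auto_derive; [exact I|ring]. Qed.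

Lemma curve3_der x : derivable_pt_lim curve3 x (curve3' x).
Proof.
  apply is_derive_Reals.
  unfold curve3, curve3', curve1, curve2, lift3, planar1, planar2, planar1', planar2',
    bump1, bump2, bump1', bump2'.
  auto_derive; [exact I|field].
Qed.

Lemma polynomial_derivatives :
  (forall x, exists l, derivable_pt_lim planar1' x l) /\
  (forall x, exists l, derivable_pt_lim planar2' x l) /\
  (forall x, exists l, derivable_pt_lim curve3' x l) /\
  (forall x, exists l, derivable_pt_lim (fun s => planar1' s ^ 2 + planar2' s ^ 2) x l).
Proof.
  unfold curve3', curve1, curve2, planar1, planar2, planar1', planar2', bump1, bump2, bump1', bump2'.
  repeat split; intro x; eexists; apply is_derive_Reals; auto_derive; (exact I || reflexivity).
Qed.

Lemma speed_continuous x : continuity_pt speed x.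
Proof.
  unfold horizontal_speed.
  change (continuity_pt (comp sqrt (fun s => planar1' s ^ 2 + planar2' s ^ 2)) x).
  apply continuity_pt_comp.
  - apply derivable_continuous, polynomial_derivatives.
  - apply continuity_pt_sqrt. apply Rplus_le_le_0_compat; apply pow2_ge_0.
Qed.

(** Crude bounds [|bump1'| <= 13] and [|bump2'| <= 63] on [(0, 1)]. *)
Lemma speed_bound s : 0 < s < 1 -> speed s <= Rabs z1 + Rabs z2 + 13 * Rabs al + 63 * Rabs be.
Proof.
  intros Hs. unfold horizontal_speed. eapply Rle_trans; [apply sqrt_sum_sq_le|].
  assert (0 <= s ^ 2 <= 1) by (split; [apply pow2_ge_0|]; nra).
  assert (0 <= s ^ 3 <= 1) by (split; [apply pow_le; lra|]; simpl; nra).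
  assert (Rabs (bump1' s) <= 13) by (unfold bump1'; apply Rabs_le; lra).
  assert (Rabs (bump2' s) <= 63) by (unfold bump2'; apply Rabs_le; lra).
  unfold planar1', planar2'.
  pose proof (Rabs_triang z1 (al * bump1' s)). pose proof (Rabs_triang z2 (be * bump2' s)).
  rewrite Rabs_mult in *.
  assert (Rabs al * Rabs (bump1' s) <= Rabs al * 13) by (apply Rmult_le_compat_l; auto using Rabs_pos).
  assert (Rabs be * Rabs (bump2' s) <= Rabs be * 63) by (apply Rmult_le_compat_l; auto using Rabs_pos).
  lra.
Qed.

Lemma explicit_curve_length :
  exists L, cc_length_of_curve_joining (p1, p2, p3) (hmul (p1, p2, p3) (z1, z2, 2 * (al * be) / 35)) L
    /\ L <= Rabs z1 + Rabs z2 + 13 * Rabs al + 63 * Rabs be.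
Proof.
  destruct polynomial_derivatives as (D1 & D2 & D3 & _).
  assert (pr : Riemann_integrable speed 0 1).
  { apply continuity_implies_RiemannInt; [lra|]. intros; apply speed_continuous. }
  exists (RiemannInt pr). split.
  - exists 0, 1, curve1, curve2, curve3, planar1', planar2', curve3'.
    split; [|split; [|split]].
    + split; [lra|]. intros s _.
      repeat split; auto using curve1_der, curve2_der, curve3_der, derivable_continuous.
    + unfold curve1, curve2, curve3, planar1, planar2, lift3, bump1, bump2.
      apply triple_eq; ring.
    + unfold curve1, curve2, curve3, planar1, planar2, lift3, bump1, bump2.
      simpl. apply triple_eq; field.
    + exists pr. reflexivity.
  - set (M := Rabs z1 + Rabs z2 + 13 * Rabs al + 63 * Rabs be).
    pose proof (RiemannInt_P19 pr (RiemannInt_P14 0 1 M) ltac:(lra)) as Hmono.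
    rewrite RiemannInt_P15 in Hmono.
    assert (RiemannInt pr <= M * (1 - 0)); [|lra].
    apply Hmono. intros; apply speed_bound; lra.
Qed.
End ExplicitCurve.

Lemma vertical_split t :
  exists al be, 2 * (al * be) / 35 = t /\ 13 * Rabs al + 63 * Rabs be <= 1116 * sqrt (Rabs t).
Proof.
  set (s := sqrt (Rabs t)).
  assert (Hs : 0 <= s) by apply sqrt_pos.
  assert (Hss : s * s = Rabs t) by (apply sqrt_sqrt, Rabs_pos).
  destruct (Rle_lt_dec 0 t) as [Ht|Ht].
  - exists s, (35 / 2 * s). rewrite Rabs_pos_eq in Hss by lra.
    split; [replace (2 * (s * (35 / 2 * s)) / 35) with (s * s) by field; lra|].
    rewrite Rabs_mult, !Rabs_pos_eq by lra. lra.
  - exists s, (- (35 / 2) * s). rewrite Rabs_left in Hss by lra.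
    split; [replace (2 * (s * (- (35 / 2) * s)) / 35) with (- (s * s)) by field; lra|].
    rewrite Rabs_mult, (Rabs_left (- (35 / 2))), (Rabs_pos_eq s) by lra. lra.
Qed.

Lemma short_curve p q : exists L, cc_length_of_curve_joining p q L /\ L <= 1200 * dH p q.
Proof.
  destruct p as [[p1 p2] p3].
  pose proof (hmul_increment (p1, p2, p3) q) as Eq. unfold dH.
  destruct (hmul (hinv (p1, p2, p3)) q) as [[z1 z2] t].
  destruct (kor_coord_bounds z1 z2 t) as [K1 [K2 K3]].
  pose proof (kor_nonneg (z1, z2, t)) as HK.
  set (K := kor_norm (z1, z2, t)) in *.
  assert (Hst : sqrt (Rabs t) <= K).
  { rewrite <- (sqrt_pow2 K HK). now apply sqrt_le_1_alt. }
  destruct (vertical_split t) as (al & be & <- & Hab).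
  destruct (explicit_curve_length p1 p2 p3 z1 z2 al be) as [L [HL Hlen]].
  exists L. split; [now rewrite Eq | lra].
Qed.

Lemma ftc_C1 (g g' : R -> R) a s :
  a <= s ->
  (forall x, a <= x <= s -> derivable_pt_lim g x (g' x)) ->
  (forall x, a <= x <= s -> continuity_pt g' x) ->
  ex_RInt g' a s /\ RInt g' a s = g s - g a.
Proof.
  intros Has Hd Hc.
  assert (HI : is_RInt g' a s (minus (g s) (g a))).
  { apply (@is_RInt_derive R_CompleteNormedModule g g').
    - intros x Hx. rewrite Rmin_left, Rmax_right in Hx by lra. apply is_derive_Reals. auto.
    - intros x Hx. rewrite Rmin_left, Rmax_right in Hx by lra.
      apply continuity_pt_filterlim. auto. }
  split; [now exists (minus (g s) (g a))|].
  now rewrite (is_RInt_unique _ _ _ _ HI).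
Qed.

Lemma RInt_abs_le (h f : R -> R) a s c :
  a <= s -> ex_RInt h a s -> ex_RInt f a s ->
  (forall x, a < x < s -> Rabs (h x) <= c * f x) ->
  Rabs (RInt h a s) <= c * RInt f a s.
Proof.
  intros Has Hh Hf Hb.
  assert (Ecf : RInt (fun x => c * f x) a s = c * RInt f a s) by exact (RInt_scal f a s c Hf).
  assert (Xcf : ex_RInt (fun x => c * f x) a s) by exact (ex_RInt_scal f a s c Hf).
  assert (Eo : RInt (fun x => - h x) a s = - RInt h a s) by exact (RInt_opp h a s Hh).
  assert (Xo : ex_RInt (fun x => - h x) a s) by exact (ex_RInt_opp h a s Hh).
  rewrite <- Ecf.
  apply Rabs_le. split.
  - rewrite <- (Ropp_involutive (RInt h a s)), <- Eo.
    apply Ropp_le_contravar, RInt_le; auto.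
    intros x Hx. specialize (Hb x Hx). pose proof (Rle_abs (- h x)).
    rewrite Rabs_Ropp in *. lra.
  - apply RInt_le; auto. intros x Hx. specialize (Hb x Hx). pose proof (Rle_abs (h x)). lra.
Qed.

(** Ball-box comparison, lower half: along a horizontal curve of length [L] the
    horizontal coordinates move by at most [L] and the (left-invariant) vertical
    coordinate by at most [4 L^2], by integrating the horizontality equation. *)
Section HorizontalCurveBounds.
Variables (a b : R) (g1 g2 g3 g1' g2' g3' : R -> R).
Notation speed := (horizontal_speed g1' g2').
Notation L := (RInt speed a b).
Hypothesis curve : horizontal_C1_curve a b g1 g2 g3 g1' g2' g3'.
Hypothesis speed_integrable : ex_RInt speed a b.

Lemma speed_ge_coords x : Rabs (g1' x) <= speed x /\ Rabs (g2' x) <= speed x.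
Proof.
  unfold horizontal_speed. rewrite <- !sqrt_Rsqr_abs.
  pose proof (pow2_ge_0 (g1' x)); pose proof (pow2_ge_0 (g2' x)).
  split; apply sqrt_le_1_alt; unfold Rsqr; lra.
Qed.

Lemma length_partial_le s : a <= s <= b -> ex_RInt speed a s /\ RInt speed a s <= L.
Proof.
  intros Hs.
  assert (X1 : ex_RInt speed a s) by (apply (ex_RInt_Chasles_1 speed a s b); auto).
  assert (X2 : ex_RInt speed s b) by (apply (ex_RInt_Chasles_2 speed a s b); auto).
  split; [exact X1|].
  pose proof (RInt_Chasles speed a s b X1 X2) as E. simpl in E. unfold plus in E; simpl in E.
  assert (0 <= RInt speed s b) by (apply RInt_ge_0; try lra; auto; intros; apply sqrt_pos).
  lra.
Qed.

Lemma displacement_le_length (g g' : R -> R) :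
  (forall s, a <= s <= b -> derivable_pt_lim g s (g' s) /\ continuity_pt g' s) ->
  (forall x, Rabs (g' x) <= speed x) ->
  forall s, a <= s <= b -> Rabs (g s - g a) <= L.
Proof.
  intros Hg Hv s Hs.
  destruct (ftc_C1 g g' a s ltac:(lra)) as [X E]; try (intros; apply Hg; lra).
  destruct (length_partial_le s Hs) as [Xv Hv'].
  rewrite <- E. eapply Rle_trans; [apply (RInt_abs_le g' speed a s 1); auto; try lra|].
  - intros; rewrite Rmult_1_l; auto.
  - lra.
Qed.

Lemma horizontal_displacement s :
  a <= s <= b -> Rabs (g1 s - g1 a) <= L /\ Rabs (g2 s - g2 a) <= L.
Proof.
  destruct curve as [_ Hc].
  split; [apply (displacement_le_length g1 g1') | apply (displacement_le_length g2 g2')];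
    auto; try (intro; apply speed_ge_coords);
    intros x Hx; destruct (Hc x Hx) as (? & ? & ? & ? & ? & ? & ?); auto.
Qed.

(** The vertical coordinate of [p^-1 * g(s)], where [p = g(a)]. *)
Definition rel_height (s : R) : R := g3 s - g3 a + 2 * (g1 a * g2 s - g2 a * g1 s).
Definition rel_height' (s : R) : R := 2 * ((g2 s - g2 a) * g1' s - (g1 s - g1 a) * g2' s).

(** By the horizontality equation, [rel_height'] is the derivative of [rel_height]. *)
Lemma rel_height_der x : a <= x <= b -> derivable_pt_lim rel_height x (rel_height' x).
Proof.
  intros Hx. destruct curve as [_ Hc].
  destruct (Hc x Hx) as (D1 & D2 & D3 & _ & _ & _ & Hhor).
  apply is_derive_Reals. apply is_derive_Reals in D1, D2, D3.
  unfold rel_height, rel_height'. auto_derive.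
  - repeat split; eexists; eassumption.
  - replace (Derive (fun x => g1 x) x) with (g1' x) by (symmetry; now apply is_derive_unique).
    replace (Derive (fun x => g2 x) x) with (g2' x) by (symmetry; now apply is_derive_unique).
    replace (Derive (fun x => g3 x) x) with (g3' x) by (symmetry; now apply is_derive_unique).
    rewrite Hhor. ring.
Qed.

Lemma rel_height'_continuous x : a <= x <= b -> continuity_pt rel_height' x.
Proof.
  intros Hx. destruct curve as [_ Hc].
  destruct (Hc x Hx) as (D1 & D2 & _ & C1 & C2 & _ & _).
  pose proof (derivable_continuous_pt g1 x (exist _ _ D1)).
  pose proof (derivable_continuous_pt g2 x (exist _ _ D2)).
  assert (Hcst : forall c, continuity_pt (fct_cte c) x)
    by (intro c; apply continuity_pt_const; unfold constant, fct_cte; auto).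
  change (continuity_pt
    (fct_cte 2 * ((g2 - fct_cte (g2 a)) * g1' - (g1 - fct_cte (g1 a)) * g2'))%F x).
  repeat first [apply continuity_pt_mult | apply continuity_pt_minus | apply Hcst | assumption].
Qed.

(** The relative height has derivative [O(L) * speed], so it moves by [O(L^2)]. *)
Lemma vertical_displacement : Rabs (rel_height b) <= 4 * L * L.
Proof.
  destruct curve as [Hab _].
  destruct (ftc_C1 rel_height rel_height' a b ltac:(lra))
    as [X E]; auto using rel_height_der, rel_height'_continuous.
  replace (rel_height b) with (rel_height b - rel_height a) by (unfold rel_height; ring).
  rewrite <- E. apply RInt_abs_le; auto; try lra.
  intros x Hx. destruct (horizontal_displacement x ltac:(lra)) as [B1 B2].
  destruct (speed_ge_coords x) as [S1 S2].
  unfold rel_height'. rewrite Rabs_mult, (Rabs_pos_eq 2) by lra.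
  pose proof (Rabs_triang ((g2 x - g2 a) * g1' x) (- ((g1 x - g1 a) * g2' x))) as T.
  rewrite Rabs_Ropp, !Rabs_mult in T.
  assert (Rabs (g2 x - g2 a) * Rabs (g1' x) <= L * speed x)
    by (apply Rmult_le_compat; auto using Rabs_pos).
  assert (Rabs (g1 x - g1 a) * Rabs (g2' x) <= L * speed x)
    by (apply Rmult_le_compat; auto using Rabs_pos).
  unfold Rminus at 1. lra.
Qed.

Lemma curve_endpoints_close :
  kor_norm (hmul (hinv (g1 a, g2 a, g3 a)) (g1 b, g2 b, g3 b)) <= 4 * L.
Proof.
  destruct curve as [Hab _].
  destruct (horizontal_displacement b ltac:(lra)) as [B1 B2].
  pose proof (Rabs_pos (g1 b - g1 a)).
  pose proof vertical_displacement as B3. unfold rel_height in B3.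
  cbn [hmul hinv]. replace (4 * L) with (2 * (2 * L)) by ring.
  apply kor_norm_bound.
  - replace (- g1 a + g1 b) with (g1 b - g1 a) by ring. lra.
  - replace (- g2 a + g2 b) with (g2 b - g2 a) by ring. lra.
  - replace (- g3 a + g3 b + 2 * (- g2 a * g1 b - - g1 a * g2 b))
      with (g3 b - g3 a + 2 * (g1 a * g2 b - g2 a * g1 b)) by ring.
    replace ((2 * L) ^ 2) with (4 * L * L) by ring. exact B3.
Qed.
End HorizontalCurveBounds.

Lemma curve_length_ge_dH p q L : cc_length_of_curve_joining p q L -> dH p q <= 4 * L.
Proof.
  intros (a & b & g1 & g2 & g3 & g1' & g2' & g3' & Hc & <- & <- & pr & <-).
  rewrite <- (RInt_Reals _ _ _ pr).
  exact (curve_endpoints_close a b g1 g2 g3 g1' g2' g3' Hc (ex_RInt_Reals_1 _ _ _ pr)).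
Qed.

(** Basic properties of [dcc] and of the distance between sets: lengths are
    nonnegative since they dominate [dH / 4], and every pair of points is
    joined by a horizontal curve. *)
Lemma curve_length_nonneg p q L : cc_length_of_curve_joining p q L -> 0 <= L.
Proof.
  intros HL. pose proof (curve_length_ge_dH p q L HL). pose proof (kor_nonneg (hmul (hinv p) q)).
  unfold dH in *. lra.
Qed.

Lemma dcc_le_dH p q : dcc p q <= 1200 * dH p q.
Proof.
  destruct (short_curve p q) as [L [HL HLe]].
  eapply Rle_trans; [apply (Rinf_le _ 0); eauto using curve_length_nonneg | exact HLe].
Qed.

Lemma dcc_nonneg p q : 0 <= dcc p q.
Proof.
  destruct (short_curve p q) as [L [HL _]].
  apply Rinf_ge; eauto using curve_length_nonneg.
Qed.

Lemma dcc_lt p q r : dcc p q < r -> exists L, cc_length_of_curve_joining p q L /\ L < r.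
Proof.
  destruct (short_curve p q) as [L [HL _]].
  apply (Rinf_lt _ 0); eauto using curve_length_nonneg.
Qed.

Lemma set_dist_le (A B : H -> Prop) x y : A x -> B y -> set_dist_cc A B <= dcc x y.
Proof.
  intros Hx Hy.
  assert (Hxy : exists p q, A p /\ B q /\ dcc x y = dcc p q) by eauto.
  apply (Rinf_le _ 0); [now exists (dcc x y) | | exact Hxy].
  intros d (p & q & _ & _ & ->). apply dcc_nonneg.
Qed.

Lemma set_dist_lt (A B : H -> Prop) x y r : A x -> B y ->
  set_dist_cc A B < r -> exists p q, A p /\ B q /\ dcc p q < r.
Proof.
  intros Hx Hy Hr. apply (Rinf_lt _ 0) in Hr.
  - destruct Hr as [d [(p & q & Hp & Hq & ->) Hd]]. eauto.
  - exists (dcc x y), x, y. auto.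
  - intros d (p & q & _ & _ & ->). apply dcc_nonneg.
Qed.

(** Sequentially compact sets are bounded in the Koranyi norm: an unbounded
    sequence has no convergent subsequence by the quasi-triangle inequality. *)
Lemma seq_compact_bounded (K : H -> Prop) :
  seq_compact dH K -> exists R, 0 <= R /\ forall x, K x -> kor_norm x <= R.
Proof.
  intros HK. apply NNPP. intro Hunb.
  assert (Hex : forall n : nat, exists x, K x /\ INR n < kor_norm x).
  { intro n. apply NNPP. intro Hn. apply Hunb. exists (INR n). split; [apply pos_INR|].
    intros x Kx. apply Rnot_lt_le. intro Hl. eauto. }
  destruct (choice _ Hex) as [u Hu].
  destruct (HK u (fun n => proj1 (Hu n))) as (phi & l & Hphi & Kl & Hcv).
  destruct (Hcv 1 ltac:(lra)) as [N HN].
  destruct (archimed (4 * (kor_norm l + 1))) as [Hup _].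
  set (n0 := Z.to_nat (up (4 * (kor_norm l + 1)))).
  assert (Hn0 : 4 * (kor_norm l + 1) < INR n0).
  { pose proof (kor_nonneg l). unfold n0.
    rewrite INR_IZR_INZ, Z2Nat.id; [lra|]. apply le_IZR. lra. }
  set (n := max N n0).
  specialize (HN n ltac:(unfold n; lia)). unfold Rdist in HN. rewrite Rminus_0_r in HN.
  assert (Hphi_ge : (n <= phi n)%nat).
  { clear -Hphi. induction n as [|n IH]; [lia|]. specialize (Hphi n (S n)). lia. }
  assert (INR n0 <= INR (phi n)) by (apply le_INR; unfold n in *; lia).
  pose proof (proj2 (Hu (phi n))) as Hbig.
  pose proof (kor_quasi l (hmul (hinv l) (u (phi n)))) as Q.
  rewrite <- hmul_increment in Q. fold (dH l (u (phi n))) in Q. rewrite dH_sym in Q.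
  pose proof (Rle_abs (dH (u (phi n)) l)).
  lra.
Qed.

Lemma piR_surjective v (w : coset_space v) : exists x, piR v x = w.
Proof.
  destruct w as [S HS]. destruct HS as [a Ha] eqn:E. exists a. subst S.
  reflexivity.
Qed.

Definition line_point (v : R * R) (s : R) : H := (s * fst v, s * snd v, 0).

Definition dir_size (v : R * R) : R := Rabs (fst v) + Rabs (snd v).

Lemma dir_size_pos v : v <> (0, 0) -> 0 < dir_size v.
Proof.
  destruct v as [v1 v2]. unfold dir_size. simpl. intros Hv.
  pose proof (Rabs_pos v1); pose proof (Rabs_pos v2).
  destruct (Req_dec v1 0) as [->|H1]; [destruct (Req_dec v2 0) as [->|H2]|].
  - now destruct Hv.
  - pose proof (Rabs_pos_lt _ H2). lra.
  - pose proof (Rabs_pos_lt _ H1). lra.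
Qed.

Lemma coset_self v a : right_coset v a a.
Proof. exists (0, 0, 0). split; [exists 0; heis_ring | now rewrite hmul_1l]. Qed.

(** Two cosets at distance [< r] contain points [p = V(s1) * a] and
    [q = V(s2) * x] with [dH p q <= 4 r]; hence [x] is obtained from [a] by a
    move along [V] followed by a right translation of norm [<= 4 r]. *)
Lemma close_cosets v a x r :
  coset_dist v (piR v a) (piR v x) < r ->
  exists u D, x = hmul (line_point v u) (hmul a D) /\ kor_norm D <= 4 * r.
Proof.
  intros Hd.
  destruct (set_dist_lt _ _ a x r (coset_self v a) (coset_self v x) Hd) as (p & q & Hp & Hq & Hpq).
  destruct (dcc_lt p q r Hpq) as (L & HL & HLr).
  pose proof (curve_length_ge_dH p q L HL) as Hk.
  destruct Hp as (p0 & [s1 ->] & ->), Hq as (q0 & [s2 ->] & ->).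
  exists (s1 - s2), (hmul (hinv (hmul (s1 * fst v, s1 * snd v, 0) a))
                          (hmul (s2 * fst v, s2 * snd v, 0) x)).
  split; [|unfold dH in Hk; lra].
  destruct v, a as [[? ?] ?], x as [[? ?] ?]. unfold line_point. heis_ring.
Qed.

Lemma close_to_common_coset v a x0 x r :
  coset_dist v (piR v a) (piR v x0) < r -> coset_dist v (piR v a) (piR v x) < r ->
  exists u E, x = hmul (line_point v u) (hmul x0 E) /\ kor_norm E <= 32 * r.
Proof.
  intros H0 H1.
  destruct (close_cosets _ _ _ _ H0) as (u0 & D0 & -> & K0).
  destruct (close_cosets _ _ _ _ H1) as (u & D & -> & K1).
  exists (u - u0), (hmul (hinv D0) D). split.
  - destruct v, a as [[? ?] ?], D as [[? ?] ?], D0 as [[? ?] ?]. unfold line_point. heis_ring.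
  - eapply Rle_trans; [apply kor_quasi|]. rewrite kor_inv. lra.
Qed.

Definition conjugated_move (v : R * R) (eta : R) (x0 : H) : H :=
  let '(a1, a2, _) := x0 in
  (eta * fst v, eta * snd v, 4 * eta * (snd v * a1 - fst v * a2)).

Lemma line_conjugation v s u x0 E :
  hmul (hinv (hmul (line_point v s) x0)) (hmul (line_point v u) (hmul x0 E))
  = hmul (conjugated_move v (u - s) x0) E.
Proof. destruct v, x0 as [[? ?] ?], E as [[? ?] ?]. unfold line_point. heis_ring. Qed.

Definition shift_const (v : R * R) (R0 : R) : R := 1 + dir_size v * (1 + R0).

Lemma conjugated_move_small v x0 R0 eta r :
  kor_norm x0 <= R0 -> 0 < r <= 1 -> 0 <= eta <= r ^ 2 ->
  kor_norm (conjugated_move v eta x0) <= 2 * (r * shift_const v R0).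
Proof.
  destruct v as [v1 v2], x0 as [[a1 a2] a3]. unfold shift_const, dir_size, conjugated_move. cbn [fst snd].
  intros Hx0 Hr Heta.
  destruct (kor_coord_bounds a1 a2 a3) as (A1 & A2 & _).
  pose proof (Rabs_pos v1); pose proof (Rabs_pos v2).
  assert (HR0 : 0 <= R0) by (pose proof (Rabs_pos a1); lra).
  set (n := Rabs v1 + Rabs v2) in *.
  assert (Hn : 0 <= n) by (unfold n; lra).
  assert (Hrr : r ^ 2 <= r) by (simpl; nra).
  assert (Hnc : n <= 1 + n * (1 + R0)) by nra.
  assert (Hv : forall w, Rabs w <= n -> Rabs (eta * w) <= r * (1 + n * (1 + R0))).
  { intros w Hw. rewrite Rabs_mult, (Rabs_pos_eq eta) by lra.
    assert (eta * Rabs w <= r * n) by (apply Rmult_le_compat; lra || apply Rabs_pos).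
    nra. }
  apply kor_norm_bound; [apply Hv; unfold n; lra | apply Hv; unfold n; lra|].
  assert (Hw : Rabs (v2 * a1 - v1 * a2) <= n * R0).
  { unfold Rminus. eapply Rle_trans; [apply Rabs_triang|].
    rewrite Rabs_Ropp, !Rabs_mult.
    assert (Rabs v2 * Rabs a1 <= Rabs v2 * R0) by (apply Rmult_le_compat_l; lra).
    assert (Rabs v1 * Rabs a2 <= Rabs v1 * R0) by (apply Rmult_le_compat_l; lra).
    unfold n. lra. }
  rewrite !Rabs_mult, (Rabs_pos_eq 4), (Rabs_pos_eq eta) by lra.
  assert (4 * eta * Rabs (v2 * a1 - v1 * a2) <= 4 * r ^ 2 * (n * R0))
    by (apply Rmult_le_compat; try nra; apply Rabs_pos).
  assert (0 <= n * R0) by nra.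
  assert (4 * (n * R0) <= (1 + n * (1 + R0)) ^ 2)
    by (pose proof (pow2_ge_0 (1 - n * (1 + R0))); nra).
  replace ((r * (1 + n * (1 + R0))) ^ 2) with (r ^ 2 * (1 + n * (1 + R0)) ^ 2) by ring.
  nra.
Qed.

(** Points of a bounded set lying on nearby cosets move along [V] by a bounded
    amount: the horizontal coordinates of [x = V(u) * x0 * E] are [u v + x0 + E]. *)
Lemma line_parameter_bound v x0 x u E R0 r :
  kor_norm x0 <= R0 -> kor_norm x <= R0 -> kor_norm E <= 32 * r -> r <= 1 ->
  x = hmul (line_point v u) (hmul x0 E) -> Rabs u * dir_size v <= 4 * R0 + 64.
Proof.
  destruct v as [v1 v2], x0 as [[a1 a2] a3], x as [[y1 y2] y3], E as [[e1 e2] e3].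
  unfold dir_size, line_point. cbn [fst snd hmul].
  intros Hx0 Hx HE Hr Hx_eq. injection Hx_eq as Hy1 Hy2 _.
  destruct (kor_coord_bounds a1 a2 a3) as (A1 & A2 & _).
  destruct (kor_coord_bounds y1 y2 y3) as (Y1 & Y2 & _).
  destruct (kor_coord_bounds e1 e2 e3) as (F1 & F2 & _).
  assert (Hcoord : forall y vi ai ei, y = u * vi + (ai + ei) ->
            Rabs u * Rabs vi <= Rabs y + Rabs ai + Rabs ei).
  { intros y vi ai ei Hy. rewrite <- Rabs_mult.
    replace (u * vi) with (y + - ai + - ei) by lra.
    pose proof (Rabs_triang (y + - ai) (- ei)). pose proof (Rabs_triang y (- ai)).
    rewrite !Rabs_Ropp in *. lra. }
  pose proof (Hcoord _ _ _ _ Hy1). pose proof (Hcoord _ _ _ _ Hy2). lra.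
Qed.

Definition grid_size (U d : R) : nat := S (Z.to_nat (up (2 * U / d))).

Lemma grid_index U d u :
  0 < d -> - U <= u <= U ->
  exists j, (j < grid_size U d)%nat /\ 0 <= u - (- U + INR j * d) <= d.
Proof.
  intros Hd Hu.
  set (t := (u + U) / d).
  assert (Htd : t * d = u + U) by (unfold t; field; lra).
  assert (Ht0 : 0 <= t) by (unfold t; apply Rdiv_le_0_compat; lra).
  assert (Ht1 : t <= 2 * U / d) by (unfold t; apply Rmult_le_compat_r; [apply Rlt_le, Rinv_0_lt_compat|]; lra).
  destruct (archimed t) as [T1 T2]. destruct (archimed (2 * U / d)) as [B1 _].
  assert (Hm0 : (0 < up t)%Z) by (apply lt_IZR; lra).
  assert (HmN : (up t - 1 < up (2 * U / d))%Z) by (apply lt_IZR; rewrite minus_IZR; lra).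
  exists (Z.to_nat (up t - 1)).
  rewrite INR_IZR_INZ, Z2Nat.id, minus_IZR by lia. split.
  - unfold grid_size. lia.
  - assert (0 <= (t - (IZR (up t) - 1)) * d <= d) by (split; nra). lra.
Qed.

Lemma Rpower_minus_two r : 0 < r -> Rpower r (Ropp 2) = / r ^ 2.
Proof.
  intros Hr. replace 2 with (INR 2) at 1 by (simpl; ring).
  now rewrite Rpower_Ropp, Rpower_pow.
Qed.

(** With step [r^2] the grid has [O(r^-2)] points: this is the exponent [2]. *)
Lemma grid_size_bound U r C :
  0 <= U -> 0 < r <= 1 -> 2 * U + 2 <= C -> INR (grid_size U (r ^ 2)) <= C * Rpower r (Ropp 2).
Proof.
  intros HU Hr HC. rewrite Rpower_minus_two by lra.
  assert (Hd : 0 < r ^ 2 <= 1) by (split; [apply pow_lt|simpl]; nra).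
  assert (Hid : 1 <= / r ^ 2) by (rewrite <- Rinv_1; apply Rinv_le_contravar; lra).
  assert (Hq : 0 <= 2 * U / r ^ 2) by (apply Rdiv_le_0_compat; lra).
  destruct (archimed (2 * U / r ^ 2)) as [A1 A2].
  unfold grid_size. rewrite S_INR, INR_IZR_INZ, Z2Nat.id by (apply le_IZR; lra).
  assert (C * / r ^ 2 >= (2 * U + 2) * / r ^ 2) by (apply Rle_ge, Rmult_le_compat_r; lra).
  unfold Rdiv in *. lra.
Qed.

Lemma piR_lipschitz v x y : coset_dist v (piR v x) (piR v y) <= 1200 * dH x y.
Proof.
  eapply Rle_trans; [apply set_dist_le; apply coset_self | apply dcc_le_dH].
Qed.

Lemma grid_covers_preimage v (K : H -> Prop) R0 a x0 x r :
  v <> (0, 0) -> (forall y, K y -> kor_norm y <= R0) -> 0 < r <= 1 ->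
  K x0 -> coset_dist v (piR v a) (piR v x0) < r ->
  K x -> coset_dist v (piR v a) (piR v x) < r ->
  let U := (4 * R0 + 64) / dir_size v in
  exists j, (j < grid_size U (r ^ 2))%nat /\
    dH (hmul (line_point v (- U + INR j * r ^ 2)) x0) x <= (8 * shift_const v R0 + 128) * r.
Proof.
  intros Hv HKb Hr Kx0 Hx0 Kx Hx U.
  pose proof (dir_size_pos v Hv) as Hn.
  destruct (close_to_common_coset v a x0 x r Hx0 Hx) as (u & E & Hxe & HE).
  pose proof (line_parameter_bound v x0 x u E R0 r (HKb _ Kx0) (HKb _ Kx) HE ltac:(lra) Hxe) as Hu.
  assert (HuU : - U <= u <= U).
  { apply Rabs_le_between. unfold U. apply (Rmult_le_reg_r (dir_size v)); [lra|].
    unfold Rdiv. rewrite Rmult_assoc, Rinv_l by lra. lra. }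
  destruct (grid_index U (r ^ 2) u ltac:(apply pow_lt; lra) HuU) as (j & Hj & Heta).
  exists j. split; [exact Hj|].
  unfold dH. rewrite Hxe, line_conjugation.
  eapply Rle_trans; [apply kor_quasi|].
  pose proof (conjugated_move_small v x0 R0 (u - (- U + INR j * r ^ 2)) r (HKb _ Kx0) Hr Heta).
  lra.
Qed.

(** Surjectivity, the Lipschitz bound, and the grid cover with constants
    [C = 1 + (2U + 2) + M], [r0 = 1]; a ball meeting no point of [K] needs no center. *)
Theorem proposition6p7 (v : R * R) (hv : v <> (0, 0)) :
  locally_DS_regular dH (coset_dist v) (piR v) 2.
Proof.
  split; [apply piR_surjective|].
  intros K HK. destruct (seq_compact_bounded K HK) as [R0 [HR0 HKb]].
  split; [exists 1200; intros x y _ _; apply piR_lipschitz|].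
  pose proof (dir_size_pos v hv) as Hn.
  set (U := (4 * R0 + 64) / dir_size v).
  assert (HU : 0 <= U) by (apply Rdiv_le_0_compat; lra).
  set (M := 8 * shift_const v R0 + 128).
  assert (HM : 0 <= M) by (unfold M, shift_const; nra).
  exists (1 + (2 * U + 2) + M), 1. split; [lra|]. split; [lra|].
  intros w r Hr. destruct (piR_surjective v w) as [a <-].
  destruct (classic (exists x0, K x0 /\ coset_dist v (piR v a) (piR v x0) < r))
    as [[x0 [Kx0 Hx0]] | Hnone].
  - exists (map (fun j => hmul (line_point v (- U + INR j * r ^ 2)) x0) (seq 0 (grid_size U (r ^ 2)))).
    split.
    + rewrite length_map, length_seq. apply grid_size_bound; lra.
    + intros x Kx Hx.
      destruct (grid_covers_preimage v K R0 a x0 x r hv HKb ltac:(lra) Kx0 Hx0 Kx Hx)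
        as (j & Hj & Hdist).
      eexists. split; [apply in_map, in_seq; split; [lia | exact Hj]|].
      fold U M in Hdist. nra.
  - exists nil. split.
    + simpl. rewrite Rpower_minus_two by lra.
      apply Rmult_le_pos; [lra|]. apply Rlt_le, Rinv_0_lt_compat, pow_lt. lra.
    + intros x Kx Hx. exfalso. eauto.
Qed.
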